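(* Let $p=2$ and let $a,b\in\mathbb{C}_2$ with $a\neq0$, $b\neq0$, $a\neq b$ and $|2a|_2>|b|_2$. Let $P=-\frac1b$, $D=\mathbb{C}_2\setminus\{P\}$, $f(x)=\frac{ax^2}{bx+1}$ on $D$, $x_1=0$, $x_2=\frac1{a-b}$, and $r_1=\frac1{|a|_2}$. Then $x_1$ and $x_2$ are attracting fixed points of $f$, and $$A(x_1)=B_{r_1}(x_1),\qquad A(x_2)=B_{r_1}(x_2).$$
   Context: $\mathbb{C}_2$ is the field of complex $2$-adic numbers with $2$-adic norm $|\cdot|_2$. For $c\in\mathbb{C}_2$, $r>0$: $B_r(c)=\{x:|x-c|_2<r\}$. For $y\in D$, $y^{(n)}=f^n(y)$ is the $n$-th iterate (defined as long as no earlier iterate equals $P$). A fixed point $x^{(0)}$ of $f$ is attracting if $|f'(x^{(0)})|_2<1$. Its basin of attraction is $A(x^{(0)})=\{y: y^{(n)}\text{ defined for all }n,\ y^{(n)}\to x^{(0)}\}$. *)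

From HB Require Import structures.
From mathcomp Require Import all_boot all_order all_algebra.
From mathcomp Require Import reals.
Set Implicit Arguments. Unset Strict Implicit. Unset Printing Implicit Defensive.
Import Order.TTheory GRing.Theory Num.Theory.
Local Open Scope ring_scope.

(* abs is a complete non-archimedean absolute value on the algebraically
   closed field K of characteristic 0, normalized by |2| = 1/2
   (so it restricts to the 2-adic absolute value on Q). *)
Definition C2_like (K : closedFieldType) (R : realType) (abs : K -> R) : Prop :=
  (forall x, 0 <= abs x) /\
  (forall x, abs x = 0 <-> x = 0) /\
  (forall x y, abs (x * y) = abs x * abs y) /\
  (forall x y, abs (x + y) <= Num.max (abs x) (abs y)) /\
  (forall n : nat, (n.+1)%:R != 0 :> K) /\
  abs 2 = 2^-1 /\
  (forall u : nat -> K,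
     (forall e, 0 < e -> exists N, forall m n, (N <= m)%N -> (N <= n)%N ->
        abs (u m - u n) < e) ->
     exists l, forall e, 0 < e -> exists N, forall n, (N <= n)%N ->
        abs (u n - l) < e).

Definition cvgK (K : fieldType) (R : realType) (abs : K -> R)
  (u : nat -> K) (l : K) : Prop :=
  forall e, 0 < e -> exists N, forall n, (N <= n)%N -> abs (u n - l) < e.

Definition ballK (K : fieldType) (R : realType) (abs : K -> R)
  (c : K) (r : R) (x : K) : Prop := abs (x - c) < r.

Definition has_derivK (K : fieldType) (R : realType) (abs : K -> R)
  (f : K -> K) (x0 L : K) : Prop :=
  forall e, 0 < e -> exists d, 0 < d /\ forall h, 0 < abs h -> abs h < d ->
    abs ((f (x0 + h) - f x0) / h - L) < e.

Definition attracting (K : fieldType) (R : realType) (abs : K -> R)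
  (f : K -> K) (P x0 : K) : Prop :=
  x0 != P /\ f x0 = x0 /\ exists L, has_derivK abs f x0 L /\ abs L < 1.

(* basin of attraction: all iterates defined (y^(n) <> P for all n,
   including y^(0) = y) and y^(n) -> x0 *)
Definition basin (K : fieldType) (R : realType) (abs : K -> R)
  (f : K -> K) (P x0 y : K) : Prop :=
  (forall n, iter n f y != P) /\ cvgK abs (fun n => iter n f y) x0.

From HB Require Import structures.
From mathcomp Require Import all_boot all_order all_algebra.
From mathcomp Require Import reals.
From mathcomp Require Import ring lra.
Set Implicit Arguments. Unset Strict Implicit. Unset Printing Implicit Defensive.
Import Order.TTheory GRing.Theory Num.Theory.
Local Open Scope ring_scope.

(* Put r = 1/|a|.  Since |b| < |2a| = |a|/2, the denominator satisfies
   |b x + 1| = 1 on the closed disc |x| <= r, where therefore |f x| = |a| |x|^2,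
   and the identity f x - x2 = (x - x2) (a x + 1) / (b x + 1), together with
   |a x2 + 1| = 1/2, makes f a contraction towards x2 on |x - x2| < r.  Outside
   the disc |f x| >= |x|, so the regions |x| >= r and |x - x2| >= r are forward
   invariant and keep every orbit at distance >= r from x1, resp. x2. *)

Lemma bernoulli_ineq (R : realFieldType) (t : R) n :
  0 <= t -> 1 + t *+ n <= (1 + t) ^+ n.
Proof.
move=> t0; elim: n => [|n IH]; first by rewrite mulr0n addr0 expr0.
have tn0 : 0 <= t * (t *+ n) by rewrite mulr_ge0 // mulrn_wge0.
rewrite exprS mulrSr; apply: le_trans (ler_wpM2l _ IH); nra.
Qed.

Lemma expr_lt_eventually (R : archiRealFieldType) (k e : R) :
  0 <= k -> k < 1 -> 0 < e -> exists N, forall n, (N <= n)%N -> k ^+ n < e.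
Proof.
move=> k0 k1 e0; have [->|k_neq0] := eqVneq k 0.
  by exists 1%N => -[|n] //= _; rewrite expr0n.
have kp : 0 < k by rewrite lt_neqAle eq_sym k_neq0.
pose t := k^-1 - 1.
have tp : 0 < t by rewrite subr_gt0 invf_gt1.
have kt : k * (1 + t) = 1 by rewrite addrC subrK mulfV.
have te0 : 0 < t * e by rewrite mulr_gt0.
exists (Num.bound (t * e)^-1) => n hn.
have hNn : 1 < t * e * n%:R.
  rewrite -[X in X < _](mulfV (lt0r_neq0 te0)) ltr_pM2l //.
  apply: lt_le_trans (archi_boundP _) _.
    by rewrite invr_ge0 ltW.
  by rewrite ler_nat.
have kn0 : 0 < k ^+ n by rewrite exprn_gt0.
have : k ^+ n * (1 + t *+ n) <= (k * (1 + t)) ^+ n.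
  by rewrite exprMn ler_wpM2l ?bernoulli_ineq // ltW.
by rewrite kt expr1n -mulr_natr; nra.
Qed.

Lemma has_derivK_of_error (K : fieldType) (R : realType) (abs : K -> R)
    (f : K -> K) (x0 L : K) (C d : R) :
  0 <= C -> 0 < d ->
  (forall h, 0 < abs h -> abs h < d ->
     abs ((f (x0 + h) - f x0) / h - L) <= C * abs h) ->
  has_derivK abs f x0 L.
Proof.
move=> C0 d0 hf e e0.
have C1 : 0 < C + 1 by lra.
exists (Num.min d (e / (C + 1))); split=> [|h h0]; first by rewrite lt_min d0 divr_gt0.
rewrite lt_min => /andP[hd he]; apply: le_lt_trans (hf h h0 hd) _.
by move: he; rewrite ltr_pdivlMr //; nra.
Qed.

Lemma not_basin_of_invariant (K : fieldType) (R : realType) (abs : K -> R)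
    (f : K -> K) (P c : K) (S : K -> Prop) (r : R) :
  0 < r -> (forall x, S x -> x != P -> S (f x)) ->
  (forall x, S x -> r <= abs (x - c)) ->
  forall y, S y -> ~ basin abs f P c y.
Proof.
move=> r0 fS Sfar y Sy [noP /(_ r r0)[N /(_ N (leqnn N))]].
have Sn n : S (iter n f y) by elim: n => [|n IH] //=; exact: fS (IH) (noP n).
by rewrite ltNge Sfar.
Qed.

Section UltrametricAbs.
Variables (K : closedFieldType) (R : realType) (abs : K -> R).
Hypothesis habs : C2_like abs.

Lemma abs_ge0 x : 0 <= abs x.
Proof. by case: habs. Qed.

Lemma abs0 : abs 0 = 0.
Proof. by case: habs => _ [/(_ 0) [_ ->]]. Qed.

Lemma abs_gt0 x : x != 0 -> 0 < abs x.
Proof.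
case: habs => _ [/(_ x) [eq0 _] _] xn0.
by rewrite lt_neqAle abs_ge0 andbT eq_sym; apply: contra xn0 => /eqP /eq0 ->.
Qed.

Lemma absM x y : abs (x * y) = abs x * abs y.
Proof. by case: habs => _ [_ [? _]]. Qed.

Lemma abs_add_le_max x y : abs (x + y) <= Num.max (abs x) (abs y).
Proof. by case: habs => _ [_ [_ [? _]]]. Qed.

Lemma abs2 : abs 2 = 2^-1.
Proof. by case: habs => _ [_ [_ [_ [_ [? _]]]]]. Qed.

Lemma abs1 : abs 1 = 1.
Proof.
have a1 := abs_gt0 (oner_neq0 K).
by apply: (mulfI (lt0r_neq0 a1)); rewrite -absM !mulr1.
Qed.

Lemma absN x : abs (- x) = abs x.
Proof.
suff aN1 : abs (-1) = 1 by rewrite -mulN1r absM aN1 mul1r.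
have aN1_ge0 := abs_ge0 (-1).
have : abs (-1) ^+ 2 = 1 by rewrite expr2 -absM mulrNN mulr1 abs1.
by move/eqP; rewrite sqrf_eq1 => /orP[/eqP //|/eqP aN1]; rewrite aN1 in aN1_ge0; lra.
Qed.

Lemma absV x : abs x^-1 = (abs x)^-1.
Proof.
have [->|xn0] := eqVneq x 0; first by rewrite invr0 abs0 invr0.
apply: (mulfI (lt0r_neq0 (abs_gt0 xn0))).
by rewrite -absM !mulfV ?abs1 ?lt0r_neq0 ?abs_gt0.
Qed.

Lemma absX x n : abs (x ^+ n) = abs x ^+ n.
Proof. by elim: n => [|n IH]; rewrite ?abs1 // !exprS absM IH. Qed.

Lemma abs_add_le x y c : abs x <= c -> abs y <= c -> abs (x + y) <= c.
Proof. by move=> xc yc; apply: le_trans (abs_add_le_max x y) _; rewrite ge_max xc. Qed.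

Lemma abs_isosceles x y : abs x < abs y -> abs (x + y) = abs y.
Proof.
move=> xy; apply/eqP; rewrite eq_le abs_add_le ?(ltW xy) //=.
have := abs_add_le_max (x + y) (- x); rewrite addrC addKr absN le_max.
by case/orP=> // yx; move: xy; rewrite ltNge yx.
Qed.

Lemma basin_of_contraction (f : K -> K) (P c y : K) (k s : R) :
  0 <= k -> k < 1 -> abs (y - c) <= s ->
  (forall x, abs (x - c) <= s -> x != P /\ abs (f x - c) <= k * abs (x - c)) ->
  basin abs f P c y.
Proof.
move=> k0 k1 ys hf.
have y0 := abs_ge0 (y - c).
have iter_le n :
    abs (iter n f y - c) <= k ^+ n * abs (y - c) /\ abs (iter n f y - c) <= s.
  elim: n => [|n [IH IHs]]; first by rewrite expr0 mul1r.
  have kn1 : k ^+ n.+1 <= 1 by rewrite exprn_ile1 // ltW.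
  have IH' : abs (iter n.+1 f y - c) <= k ^+ n.+1 * abs (y - c).
    apply: le_trans (hf _ IHs).2 _.
    by rewrite exprS -mulrA ler_wpM2l.
  split=> //; apply: le_trans IH' _; nra.
split=> [n|e e0]; first exact: (hf _ (iter_le n).2).1.
have [|N kN] := @expr_lt_eventually _ k (e / (s + 1)) k0 k1.
  by rewrite divr_gt0 //; lra.
exists N => n /kN; rewrite ltr_pdivlMr; last lra.
have kn0 : 0 <= k ^+ n by rewrite exprn_ge0.
have := (iter_le n).1; nra.
Qed.

End UltrametricAbs.

Section RationalMap.
Variables (K : closedFieldType) (R : realType) (abs : K -> R).
Hypothesis habs : C2_like abs.
Variables a b : K.
Hypotheses (ha : a != 0) (hb : b != 0) (hab : a != b) (h2ab : abs b < abs (2 * a)).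

Local Notation f := (fun x : K => a * x ^+ 2 / (b * x + 1)).
Local Notation x2 := (1 / (a - b)).
Local Notation r := (abs a)^-1.

Let a_gt0 : 0 < abs a. Proof. exact: abs_gt0. Qed.
Let r_gt0 : 0 < r. Proof. by rewrite invr_gt0. Qed.
Let abs_a_mul_r : abs a * r = 1. Proof. by rewrite mulfV // lt0r_neq0. Qed.
Let ab_neq0 : a - b != 0. Proof. by rewrite subr_eq0. Qed.

Lemma double_abs_b_lt : 2 * abs b < abs a.
Proof. by move: h2ab; rewrite absM // abs2 //; lra. Qed.

Lemma pole_eq x : (x == - 1 / b) = (b * x + 1 == 0).
Proof.
apply/eqP/eqP => [-> | den0]; first by field.
have -> : x = (b * x + 1 - 1) / b by field.
by rewrite den0 sub0r.
Qed.

Lemma abs_den_eq1 x : abs x <= r -> abs (b * x + 1) = 1.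
Proof.
move=> xr; rewrite abs_isosceles // abs1 // absM //.
have := abs_ge0 habs b; have := double_abs_b_lt.
by have := abs_a_mul_r; have := r_gt0; nra.
Qed.

Lemma den_neq0 x : abs x <= r -> b * x + 1 != 0.
Proof.
by move/abs_den_eq1/eqP; apply: contraTneq => ->; rewrite abs0 // eq_sym oner_eq0.
Qed.

Lemma abs_a_sub_b : abs (a - b) = abs a.
Proof.
rewrite addrC abs_isosceles // absN //.
have := double_abs_b_lt; have := abs_ge0 habs b; lra.
Qed.

Lemma abs_x2 : abs x2 = r.
Proof. by rewrite absM // abs1 // mul1r absV // abs_a_sub_b. Qed.

Lemma abs_a_x2_add1 : abs (a * x2 + 1) = 2^-1.
Proof.
have -> : a * x2 + 1 = (2 * a - b) * x2 by field.
rewrite absM // abs_x2 addrC abs_isosceles ?absN //.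
by rewrite absM // abs2 // -mulrA abs_a_mul_r mulr1.
Qed.

Lemma f_sub_x2 x :
  b * x + 1 != 0 -> f x - x2 = (x - x2) * (a * x + 1) / (b * x + 1).
Proof. by move=> den /=; field; rewrite den ab_neq0. Qed.

Lemma f_x2 : f x2 = x2.
Proof.
by apply/eqP; rewrite -subr_eq0 f_sub_x2 ?subrr ?mul0r // den_neq0 // abs_x2.
Qed.

Lemma abs_f x : abs (f x) = abs a * abs x ^+ 2 / abs (b * x + 1).
Proof. by rewrite /= !absM // absV // absX. Qed.

Lemma abs_f_ge x : r <= abs x -> b * x + 1 != 0 -> abs x <= abs (f x).
Proof.
move=> rx den; rewrite abs_f.
have den_gt0 := abs_gt0 habs den.
have x_ge0 := abs_ge0 habs x.
have den_le : abs (b * x + 1) <= abs a * abs x.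
  apply: abs_add_le; rewrite ?abs1 ?absM //.
  - by have := double_abs_b_lt; have := abs_ge0 habs b; nra.
  - by have := abs_a_mul_r; have := a_gt0; nra.
by rewrite ler_pdivlMr // expr2; nra.
Qed.

Lemma diff_quotient_at0 h : 0 < abs h -> abs h < r ->
  abs ((f (0 + h) - f 0) / h - 0) = abs a * abs h.
Proof.
move=> h0 hr; have hn : h != 0 by apply: contraTneq h0 => ->; rewrite abs0 // ltxx.
have den := den_neq0 (ltW hr).
have -> : (f (0 + h) - f 0) / h - 0 = a * h / (b * h + 1).
  by rewrite /= add0r; field; rewrite den hn oner_eq0.
by rewrite !absM // absV // abs_den_eq1 ?(ltW hr) // invr1 mulr1.
Qed.

Lemma diff_quotient_at_x2 h : 0 < abs h -> abs h < r ->
  abs ((f (x2 + h) - f x2) / h - (a * x2 + 1) / (b * x2 + 1)) = abs a * abs h.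
Proof.
move=> h0 hr; have hn : h != 0 by apply: contraTneq h0 => ->; rewrite abs0 // ltxx.
have x2r : abs x2 <= r by rewrite abs_x2.
have x2hr : abs (x2 + h) <= r by apply: abs_add_le => //; exact: ltW.
have den2 := den_neq0 x2r; have denh := den_neq0 x2hr.
have -> : (f (x2 + h) - f x2) / h - (a * x2 + 1) / (b * x2 + 1)
    = h * (a - b) / ((b * x2 + 1) * (b * (x2 + h) + 1)).
  rewrite f_x2 f_sub_x2 // addrAC subrr add0r.
  move: x2 den2 denh => c den2 denh.
  by field; rewrite hn den2 denh.
rewrite !absM // absV // !absM // !abs_den_eq1 //.
by rewrite abs_a_sub_b mulr1 invr1 mulr1 mulrC.
Qed.

Lemma attracting_0 : attracting abs f (- 1 / b) 0.
Proof.
split; first by rewrite pole_eq den_neq0 // abs0 // ltW.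
split; first by rewrite /= expr0n mulr0 mul0r.
exists 0; split; last by rewrite abs0 // ltr01.
apply: (has_derivK_of_error (ltW a_gt0) r_gt0) => h h0 hr.
by rewrite diff_quotient_at0.
Qed.

Lemma attracting_x2 : attracting abs f (- 1 / b) x2.
Proof.
have x2r : abs x2 <= r by rewrite abs_x2.
split; first by rewrite pole_eq den_neq0.
split; first exact: f_x2.
exists ((a * x2 + 1) / (b * x2 + 1)); split.
  apply: (has_derivK_of_error (ltW a_gt0) r_gt0) => h h0 hr.
  by rewrite diff_quotient_at_x2.
by rewrite absM // absV // abs_den_eq1 // invr1 mulr1 abs_a_x2_add1 invf_lt1 ?ltr1n.
Qed.

Lemma abs_f_sub_x2 x :
  abs x <= r -> abs (f x - x2) = abs (x - x2) * abs (a * x + 1).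
Proof.
move=> xr; rewrite f_sub_x2 ?den_neq0 // !absM // absV //.
by rewrite abs_den_eq1 // invr1 mulr1.
Qed.

Lemma a_x_add1_split x : a * x + 1 = a * (x - x2) + (a * x2 + 1).
Proof. by ring. Qed.

Lemma abs_near_x2 x : abs (x - x2) <= r -> abs x <= r.
Proof. by move=> xr; rewrite -(subrK x2 x) abs_add_le // abs_x2. Qed.

Lemma far_from_x2_invariant x :
  r <= abs (x - x2) -> b * x + 1 != 0 -> r <= abs (f x - x2).
Proof.
(* Near 0 the factor |a x + 1| = |a| |x - x2| is >= 1; far from 0,
   |f x| >= |x| > |x2|. *)
move=> rx den; have [xr|rx'] := leP (abs x) r.
  have ad : 1 <= abs a * abs (x - x2) by rewrite -abs_a_mul_r ler_wpM2l // ltW.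
  have ax1 : abs (a * x + 1) = abs a * abs (x - x2).
    rewrite a_x_add1_split (addrC (a * _)) abs_isosceles ?absM //.
    by rewrite abs_a_x2_add1; lra.
  by rewrite abs_f_sub_x2 // ax1; apply: le_trans rx (ler_peMr _ ad); rewrite abs_ge0.
have fx := abs_f_ge (ltW rx') den.
by rewrite [_ - x2]addrC abs_isosceles ?absN ?abs_x2 //; lra.
Qed.

Lemma basin_0 y : basin abs f (- 1 / b) 0 y <-> ballK abs 0 r y.
Proof.
rewrite /ballK subr0; split=> [yB | yr].
  rewrite ltNge; apply/negP => ry.
  apply: (not_basin_of_invariant (S := fun x => r <= abs x) r_gt0 _ _ ry yB).
    by move=> x rx; rewrite pole_eq => den; apply: le_trans rx (abs_f_ge rx den).
  by move=> x; rewrite subr0.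
have y0 := abs_ge0 habs y.
apply: (basin_of_contraction habs (k := abs a * abs y) (s := abs y)).
- by rewrite mulr_ge0 // ltW.
- by rewrite -abs_a_mul_r ltr_pM2l.
- by rewrite subr0.
move=> x; rewrite !subr0 => xy.
have xr : abs x <= r := le_trans xy (ltW yr).
split; first by rewrite pole_eq den_neq0.
rewrite abs_f abs_den_eq1 // divr1 expr2 mulrA ler_wpM2r ?abs_ge0 //.
by rewrite ler_wpM2l // ltW.
Qed.

Lemma basin_x2 y : basin abs f (- 1 / b) x2 y <-> ballK abs x2 r y.
Proof.
rewrite /ballK; split=> [yB | yr].
  rewrite ltNge; apply/negP => ry.
  apply: (not_basin_of_invariant (S := fun x => r <= abs (x - x2)) r_gt0 _ _ ry yB)
    => //.
  by move=> x rx; rewrite pole_eq; apply: far_from_x2_invariant.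
set s := abs (y - x2) in yr *.
have s0 : 0 <= s := abs_ge0 habs _.
apply: (basin_of_contraction habs (k := Num.max (abs a * s) 2^-1) (s := s)) => //.
- by rewrite le_max invr_ge0 ler0n orbT.
- by rewrite gt_max -[X in _ < X]abs_a_mul_r ltr_pM2l // yr invf_lt1 ?ltr1n.
move=> x xs; have xr : abs x <= r by apply: abs_near_x2; apply: le_trans xs (ltW yr).
split; first by rewrite pole_eq den_neq0.
rewrite abs_f_sub_x2 // mulrC ler_wpM2r ?abs_ge0 // a_x_add1_split.
rewrite abs_add_le // le_max ?abs_a_x2_add1 ?lexx ?orbT // absM //.
by rewrite ler_wpM2l ?xs // ltW.
Qed.

End RationalMap.

Theorem theorem3p8 (K : closedFieldType) (R : realType) (abs : K -> R)
  (habs : C2_like abs) (a b : K) (ha : a != 0) (hb : b != 0) (hab : a != b)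
  (h2ab : abs b < abs (2 * a)) :
  let P := - 1 / b in
  let f := fun x : K => a * x ^+ 2 / (b * x + 1) in
  let x1 := 0 : K in
  let x2 := 1 / (a - b) in
  let r1 := 1 / abs a in
  attracting abs f P x1 /\ attracting abs f P x2 /\
  (forall y, basin abs f P x1 y <-> ballK abs x1 r1 y) /\
  (forall y, basin abs f P x2 y <-> ballK abs x2 r1 y).
Proof.
move=> P f x1 x2 r1; rewrite /r1 div1r.
split; first exact: attracting_0.
split; first exact: attracting_x2.
by split=> y; [exact: basin_0 | exact: basin_x2].
Qed.
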